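(* Let $n\ge 0$ and let $L$ be one of the divisor classes $2f_{\mathrm{cl}}$, $h+2f_{\mathrm{cl}}$ or $h+(n+2)f_{\mathrm{cl}}$ on $\mathbb F_n$. Let $\phi\in H^0(\mathbb F_n,\mathcal O(4L))$ and $\gamma\in H^0(\mathbb F_n,\mathcal O(6L))$. If a point $x\in\mathbb F_n$ satisfies $\operatorname{ord}_x(\phi)\ge 8$ and $\operatorname{ord}_x(\gamma)\ge 12$, then there is an irreducible curve $C\ni x$ with $\operatorname{ord}_C(\phi)\ge 4$ and $\operatorname{ord}_C(\gamma)\ge 6$.
   Context: $h$ is the class of the section of $\mathbb F_n$ of self-intersection $-n$ and $f_{\mathrm{cl}}$ the fiber class; $h+nf_{\mathrm{cl}}$ is the class of the section of self-intersection $+n$. $\operatorname{ord}_x$ is the multiplicity of a section at the point $x$, $\operatorname{ord}_C$ the vanishing order along the curve $C$ (with the convention that the zero section has infinite order). *)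

From mathcomp Require Import all_boot all_algebra.
From mathcomp Require Import mpoly.
From mathcomp Require Export complex.
From mathcomp Require Import Rstruct.
Set Implicit Arguments. Unset Strict Implicit. Unset Printing Implicit Defensive.
Import GRing.Theory.
Local Open Scope ring_scope.

Definition C : closedFieldType := complex Rdefinitions.R.

(* Cox ring of the Hirzebruch surface F_n: C[x0,x1,y0,y1], variables indexed
   0,1,2,3 = x0,x1,y0,y1.  F_n = ((C^2\0) x (C^2\0)) / (C^* )^2 with
   (l,m).(x0,x1,y0,y1) = (l x0, l x1, m y0, l^(-n) m y1).
   Fiber class f_cl: {x0 = 0};  h = {y1 = 0} (self-intersection -n);
   h + n f_cl = {y0 = 0} (self-intersection +n). *)
Definition CoxRing := {mpoly C[4]}.

Definition ix0 : 'I_4 := @Ordinal 4 0 isT.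
Definition ix1 : 'I_4 := @Ordinal 4 1 isT.
Definition iy0 : 'I_4 := @Ordinal 4 2 isT.
Definition iy1 : 'I_4 := @Ordinal 4 3 isT.

(* A monomial x0^m0 x1^m1 y0^m2 y1^m3 is a section of O(a h + b f_cl)
   iff m2 + m3 = a and m0 + m1 + n m2 = b. *)
Definition monom_in_class (n a b : nat) (m : 'X_{1..4}) : bool :=
  ((m iy0 + m iy1)%N == a) && ((m ix0 + m ix1 + n * m iy0)%N == b).

Definition section_of_class (n a b : nat) (p : CoxRing) : Prop :=
  forall m, m \in msupp p -> monom_in_class n a b m.

(* Bihomogeneous elements of the Cox ring (of some class, possibly with
   negative f-coefficient): all monomials have the same bidegree
   (m0 + m1 - n m3, m2 + m3) in Z^2. *)
Definition bideg (n : nat) (m : 'X_{1..4}) : int * nat :=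
  ((m ix0 + m ix1)%:Z - (n * m iy1)%:Z, (m iy0 + m iy1)%N).

Definition bihomogeneous (n : nat) (g : CoxRing) : Prop :=
  forall m m', m \in msupp g -> m' \in msupp g -> bideg n m = bideg n m'.

Definition irreducible_cox (g : CoxRing) : Prop :=
  (1 < msize g)%N /\
  forall u v : CoxRing, g = u * v -> (msize u <= 1)%N \/ (msize v <= 1)%N.

Definition Fn_point_rep (P : 'I_4 -> C) : Prop :=
  (P ix0 != 0 \/ P ix1 != 0) /\ (P iy0 != 0 \/ P iy1 != 0).

Definition shift_at (P : 'I_4 -> C) (p : CoxRing) : CoxRing :=
  p \mPo [tuple ('X_i + (P i)%:MP) | i < 4].

(* ord_x(p) >= k, where x is the point of F_n represented by P: the
   multiplicity at x of the section p equals the multiplicity at P of the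
   polynomial p on C^4 (the quotient map is a principal (C^* )^2-bundle,
   in particular smooth, so multiplicities are preserved). *)
Definition ord_pt_ge (P : 'I_4 -> C) (p : CoxRing) (k : nat) : Prop :=
  forall m, m \in msupp (shift_at P p) -> (k <= mdeg m)%N.

Definition on_curve (g : CoxRing) (P : 'I_4 -> C) : Prop := g.@[P] = 0.

(* ord_C(p) >= k for the irreducible curve C = {g = 0}, g irreducible and
   bihomogeneous in the Cox ring: g^k divides p (zero section: infinite order). *)
Definition ord_curve_ge (g p : CoxRing) (k : nat) : Prop :=
  exists q : CoxRing, p = q * g ^+ k.

(* The three divisor classes L = a h + b f_cl, encoded as pairs (a, b). *)
Definition allowed_L (n : nat) (L : nat * nat) : Prop :=
  L = (0%N, 2%N) \/ L = (1%N, 2%N) \/ L = (1%N, (n + 2)%N).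

From mathcomp Require Import all_boot all_algebra.
From mathcomp Require Import mpoly.
From mathcomp Require Import zify ring.
Import GRing.Theory.
Local Open Scope ring_scope.

(* The curve is the fibre through x, with equation P1 x0 - P0 x1 in Cox
   coordinates P = (P0, P1, P2, P3) of x.  A linear change of the fibre
   coordinates moves x to (1, 0, c2, c3) and the fibre equation to x1.  A
   bihomogeneous p of y-degree a vanishing to order k > a there is divisible by
   x1: its x1-free part, once x0 is set to 1, is a polynomial of degree a
   vanishing to order k > a at a point, hence zero, and it is recovered from that
   dehomogenization because bihomogeneity determines the exponent of x0.
   Iterating gives x1^(k - a) | p.  For the three classes L the y-degrees 4 L.1
   and 6 L.1 are at most 4 and 6, so orders 8 and 12 give the orders 4 and 6. *)

(** * Supports of multivariate polynomials *)

Section SuppIn.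
Context {n : nat} {R : comNzRingType}.
Implicit Types (p q : {mpoly R[n]}) (S : pred 'X_{1..n}).

Definition supp_in S p := forall m, m \in msupp p -> S m.

Lemma supp_in0 S : supp_in S 0.
Proof. by move=> m; rewrite msupp0. Qed.

Lemma supp_inD S p q : supp_in S p -> supp_in S q -> supp_in S (p + q).
Proof. by move=> hp hq m /msuppD_le; rewrite mem_cat => /orP[/hp|/hq]. Qed.

Lemma supp_inZ S c p : supp_in S p -> supp_in S (c *: p).
Proof. by move=> hp m /msuppZ_le /hp. Qed.

Lemma supp_inN S p : supp_in S p -> supp_in S (- p).
Proof. by move=> hp m; rewrite (perm_mem (msuppN p)) => /hp. Qed.

Lemma supp_in_sum S (I : Type) (r : seq I) (P : pred I) (F : I -> {mpoly R[n]}) :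
  (forall i, P i -> supp_in S (F i)) -> supp_in S (\sum_(i <- r | P i) F i).
Proof.
by move=> h; apply: (big_ind (supp_in S)); [apply: supp_in0 | apply: supp_inD |].
Qed.

Lemma supp_inM S1 S2 S3 p q :
  (forall m1 m2, S1 m1 -> S2 m2 -> S3 (m1 + m2)%MM) ->
  supp_in S1 p -> supp_in S2 q -> supp_in S3 (p * q).
Proof.
move=> h hp hq m /msuppM_le /allpairsP [[m1 m2] /= [h1 h2 ->]].
exact: h (hp _ h1) (hq _ h2).
Qed.

Lemma supp_inX S m : S m -> supp_in S 'X_[m].
Proof. by move=> h m'; rewrite msuppX inE => /eqP ->. Qed.

Lemma supp_inC S c : S 0%MM -> supp_in S c%:MP.
Proof. by move=> h m; rewrite msuppC; case: (c == 0); rewrite ?inE // => /eqP ->. Qed.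

Lemma supp_in1 S : S 0%MM -> supp_in S 1.
Proof. by rewrite -mpolyC1; apply: supp_inC. Qed.

Lemma supp_inCX S c (i : 'I_n) : S U_(i)%MM -> supp_in S (c%:MP * 'X_i).
Proof. by move=> h; rewrite mul_mpolyC; apply/supp_inZ/supp_inX. Qed.

Lemma mpolyX_neq0 (i : 'I_n) : ('X_i : {mpoly R[n]}) != 0.
Proof. by rewrite -msupp_eq0 msuppX. Qed.

Lemma supp_in_mulX {S p} m0 :
  supp_in S (p * 'X_[m0]) -> supp_in (fun m => S (m0 + m)%MM) p.
Proof. by move=> h m hm; apply: h; rewrite (perm_mem (msuppMX p m0)); apply: map_f. Qed.

Lemma supp_in_disjoint_eq0 {S1 S2 p} :
  (forall m, S1 m -> S2 m -> False) -> supp_in S1 p -> supp_in S2 p -> p = 0.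
Proof.
move=> dS h1 h2; apply/eqP; rewrite -msupp_eq0.
case E: (msupp p) => [|m s] //.
have hm : m \in msupp p by rewrite E inE eqxx.
by case: (dS m (h1 m hm) (h2 m hm)).
Qed.

Lemma supp_in_disjoint_addl {S1 S2 G p q} :
  (forall m, S1 m -> S2 m -> False) ->
  supp_in S1 p -> supp_in S2 q -> supp_in G (p + q) -> supp_in G p.
Proof.
move=> dS h1 h2 hG m hm; apply: hG; rewrite mcoeff_msupp mcoeffD.
have -> : q@_m = 0.
  by apply/eqP; rewrite mcoeff_eq0; apply/negP => /h2; apply: dS (h1 m hm).
by rewrite addr0 -mcoeff_msupp.
Qed.

Lemma mpoly_splitX (i : 'I_n) p : exists q0 q1,
  p = q0 + q1 * 'X_i /\ supp_in (fun m => (m \in msupp p) && (m i == 0%N)) q0.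
Proof.
exists (\sum_(m <- msupp p | m i == 0%N) p@_m *: 'X_[m]).
exists (\sum_(m <- msupp p | m i != 0%N) p@_m *: 'X_[m - U_(i)]); split.
  rewrite {1}(mpolyE p) (bigID (fun m : 'X_{1..n} => m i == 0%N)) /= mulr_suml.
  congr (_ + _); apply: eq_bigr => m hm; rewrite -scalerAl -mpolyXD.
  congr (_ *: 'X_[_]); apply/mnmP => j.
  rewrite mnmDE mnmBE mnm1E; case: eqP => [<-|_]; last by rewrite subn0 addn0.
  by rewrite subnK // lt0n.
rewrite big_seq_cond; apply: supp_in_sum => m /andP[hm h0].
by apply/supp_inZ/supp_inX; rewrite hm.
Qed.

End SuppIn.

(** * Substitutions *)

Section Graded.
Context {k : nat}.
Implicit Types (F : nat -> pred 'X_{1..k}) (w : 'X_{1..k} -> nat).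

Definition graded F :=
  F 0%N 0%MM /\ forall a b m1 m2, F a m1 -> F b m2 -> F (a + b)%N (m1 + m2)%MM.

Definition weight_eq w d : pred 'X_{1..k} := fun m => w m == d.
Definition mdeg_ge d : pred 'X_{1..k} := fun m => (d <= mdeg m)%N.
Definition mdeg_le d : pred 'X_{1..k} := fun m => (mdeg m <= d)%N.

Lemma graded_weight_eq w :
  w 0%MM = 0%N -> (forall m1 m2, w (m1 + m2)%MM = (w m1 + w m2)%N) ->
  graded (weight_eq w).
Proof.
by move=> w0 wD; split=> [|a b m1 m2]; rewrite /weight_eq ?w0 ?wD // => /eqP-> /eqP->.
Qed.

Lemma graded_mdeg_ge : graded mdeg_ge.
Proof. by split=> // a b m1 m2; rewrite /mdeg_ge mdegD; apply: leq_add. Qed.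

Lemma graded_mdeg_le : graded mdeg_le.
Proof. by split=> [|a b m1 m2]; rewrite /mdeg_le ?mdeg0 // mdegD; apply: leq_add. Qed.

Context {R : comNzRingType} {F : nat -> pred 'X_{1..k}}.
Hypothesis gF : graded F.

Lemma supp_in_expr {c} {t : {mpoly R[k]}} e :
  supp_in (F c) t -> supp_in (F (c * e)%N) (t ^+ e).
Proof.
case: gF => F0 FD ht; elim: e => [|e ih]; first by rewrite muln0 expr0; apply: supp_in1.
by rewrite exprS mulnS; apply: supp_inM ht ih; apply: FD.
Qed.

Lemma supp_in_prod_expr {I : Type} (r : seq I) (c e : I -> nat) {t : I -> {mpoly R[k]}} :
  (forall i, supp_in (F (c i)) (t i)) ->
  supp_in (F (\sum_(i <- r) c i * e i)%N) (\prod_(i <- r) t i ^+ e i).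
Proof.
case: (gF) => F0 FD ht; elim: r => [|i r ih]; first by rewrite !big_nil; apply: supp_in1.
by rewrite !big_cons; apply: supp_inM (supp_in_expr (e i) (ht i)) ih; apply: FD.
Qed.

Lemma supp_in_comp {n} {G : pred 'X_{1..k}} (c : 'I_n -> nat)
    {t : n.-tuple {mpoly R[k]}} {p : {mpoly R[n]}} :
  (forall i, supp_in (F (c i)) (tnth t i)) ->
  (forall m, m \in msupp p -> forall m', F (\sum_(i < n) c i * m i)%N m' -> G m') ->
  supp_in G (p \mPo t).
Proof.
move=> ht hG; rewrite comp_mpolyE big_seq; apply: supp_in_sum => m mp.
apply: supp_inZ => m' /(supp_in_prod_expr (index_enum 'I_n) c (fun i => m i) ht).
exact: hG.
Qed.

End Graded.

Lemma comp_mpolyA {n k l : nat} {R : comNzRingType} (p : {mpoly R[n]})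
    (s : n.-tuple {mpoly R[k]}) (t : k.-tuple {mpoly R[l]}) :
  (p \mPo s) \mPo t = p \mPo [tuple tnth s i \mPo t | i < n].
Proof.
rewrite [p \mPo s]comp_mpolyE [RHS]comp_mpolyE raddf_sum /=.
apply: eq_bigr => m _; rewrite comp_mpolyZ rmorph_prod /=; congr (_ *: _).
by apply: eq_bigr => i _; rewrite rmorphXn /= tnth_map tnth_ord_tuple.
Qed.

Lemma comp_mpolyX_tnth {n k : nat} {R : comNzRingType} (i : 'I_n)
    (t : n.-tuple {mpoly R[k]}) : 'X_i \mPo t = tnth t i.
Proof. by rewrite comp_mpolyXU (tnth_nth 0). Qed.

Section Translate.
Context {n : nat} {R : comNzRingType}.
Implicit Types (p : {mpoly R[n]}) (v : 'I_n -> R).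

Definition translate v : n.-tuple {mpoly R[n]} := [tuple 'X_i + (v i)%:MP | i < n].

Lemma tnth_translate v i : tnth (translate v) i = 'X_i + (v i)%:MP.
Proof. by rewrite tnth_mktuple. Qed.

Lemma comp_mpoly_XC (i : 'I_n) c (t : n.-tuple {mpoly R[n]}) :
  ('X_i + c%:MP) \mPo t = tnth t i + c%:MP.
Proof. by rewrite comp_mpolyD comp_mpolyX_tnth comp_mpolyC. Qed.

Lemma translateK v p : (p \mPo translate v) \mPo translate (fun i => - v i) = p.
Proof.
rewrite comp_mpolyA -[RHS]comp_mpoly_id; congr (_ \mPo _).
apply: eq_from_tnth => i; rewrite !tnth_mktuple comp_mpoly_XC tnth_translate.
by rewrite raddfN subrK.
Qed.

Lemma supp_in_translate_mdeg_le {d} v {p} :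
  supp_in (mdeg_le d) p -> supp_in (mdeg_le d) (p \mPo translate v).
Proof.
move=> hp; apply: (supp_in_comp graded_mdeg_le (fun _ => 1%N)).
  move=> i; rewrite tnth_translate; apply: supp_inD.
    by apply: supp_inX; rewrite /mdeg_le mdeg1.
  by apply: supp_inC; rewrite /mdeg_le mdeg0.
move=> m /hp hm m'; rewrite /mdeg_le (eq_bigr _ (fun i _ => mul1n _)) -mdegE.
by move/leq_trans; apply.
Qed.

Lemma supp_in_translate_var0 (j : 'I_n) v p : v j = 0 ->
  supp_in (fun m => m j == 0%N) p -> supp_in (fun m => m j == 0%N) (p \mPo translate v).
Proof.
move=> vj hp.
have g : graded (weight_eq (fun m : 'X_{1..n} => m j)).
  by apply: graded_weight_eq => [|m1 m2]; rewrite ?mnm0E ?mnmDE.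
apply: (supp_in_comp g (fun i => nat_of_bool (i == j))).
  move=> i; rewrite tnth_translate; case: eqVneq => [->|ij].
    by rewrite vj raddf0 addr0; apply: supp_inX; rewrite /weight_eq mnm1E eqxx.
  apply: supp_inD; last by apply: supp_inC; rewrite /weight_eq mnm0E.
  by apply: supp_inX; rewrite /weight_eq mnm1E eq_sym (negbTE ij).
move=> m /hp /eqP mj m'; rewrite /weight_eq => /eqP ->.
by rewrite (bigD1 j) //= mj eqxx muln0 add0n big1 // => i /negbTE ->.
Qed.

Lemma supp_in_comp_mdeg_ge {k} d (t : n.-tuple {mpoly R[k]}) p :
  (forall i, supp_in (mdeg_ge 1) (tnth t i)) ->
  supp_in (mdeg_ge d) p -> supp_in (mdeg_ge d) (p \mPo t).
Proof.
move=> ht hp; apply: (supp_in_comp graded_mdeg_ge (fun _ => 1%N)) => // m /hp hm m'.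
rewrite /mdeg_ge (eq_bigr _ (fun i _ => mul1n _)) -mdegE; exact: leq_trans.
Qed.

End Translate.

(** * The Cox ring of F_n and the fibre through a point *)

(* The class of the monomial m in the Cox ring is (ydeg m) h + (fdeg n m) f_cl. *)
Definition ydeg (m : 'X_{1..4}) := (m iy0 + m iy1)%N.
Definition fdeg (n : nat) (m : 'X_{1..4}) := (m ix0 + m ix1 + n * m iy0)%N.

Lemma graded_ydeg : graded (weight_eq ydeg).
Proof. by apply: graded_weight_eq => [|m1 m2]; rewrite /ydeg ?mnm0E // !mnmDE; lia. Qed.

Lemma graded_fdeg n : graded (weight_eq (fdeg n)).
Proof.
by apply: graded_weight_eq => [|m1 m2]; rewrite /fdeg ?mnm0E ?muln0 // !mnmDE; lia.
Qed.

Lemma ord4P (Q : 'I_4 -> Prop) : Q ix0 -> Q ix1 -> Q iy0 -> Q iy1 -> forall i, Q i.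
Proof.
move=> h0 h1 h2 h3 [[|[|[|[|j]]]] lt_i4] //.
- by rewrite (_ : Ordinal _ = ix0) //; apply: val_inj.
- by rewrite (_ : Ordinal _ = ix1) //; apply: val_inj.
- by rewrite (_ : Ordinal _ = iy0) //; apply: val_inj.
- by rewrite (_ : Ordinal _ = iy1) //; apply: val_inj.
Qed.

Lemma big_ord4 {T : Type} {idx : T} (op : Monoid.law idx) (F : 'I_4 -> T) :
  \big[op/idx]_(i < 4) F i = op (op (op (F ix0) (F ix1)) (F iy0)) (F iy1).
Proof.
rewrite !big_ord_recl big_ord0 Monoid.mulm1 !Monoid.mulmA.
by congr (op (op (op _ _) _) _); congr F; apply: val_inj.
Qed.

Section FourVariables.
Context {R : fieldType}.
Implicit Types (p q : {mpoly R[4]}) (P v : 'I_4 -> R).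

(* Locked, so that rewriting under tnth does not unfold the tuple. *)
Fact tup4_key : unit. Proof. exact: tt. Qed.
Definition tup4 (f0 f1 f2 f3 : {mpoly R[4]}) : 4.-tuple {mpoly R[4]} :=
  locked_with tup4_key [tuple f0; f1; f2; f3].

Section Tup4.
Variables f0 f1 f2 f3 : {mpoly R[4]}.
Lemma tup4_0 : tnth (tup4 f0 f1 f2 f3) ix0 = f0. Proof. by rewrite /tup4 unlock. Qed.
Lemma tup4_1 : tnth (tup4 f0 f1 f2 f3) ix1 = f1. Proof. by rewrite /tup4 unlock. Qed.
Lemma tup4_2 : tnth (tup4 f0 f1 f2 f3) iy0 = f2. Proof. by rewrite /tup4 unlock. Qed.
Lemma tup4_3 : tnth (tup4 f0 f1 f2 f3) iy1 = f3. Proof. by rewrite /tup4 unlock. Qed.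
End Tup4.
Definition tup4E := (tup4_0, tup4_1, tup4_2, tup4_3).

Definition xlin (a b c d : R) : 4.-tuple {mpoly R[4]} :=
  tup4 (a%:MP * 'X_ix0 + b%:MP * 'X_ix1) (c%:MP * 'X_ix0 + d%:MP * 'X_ix1) 'X_iy0 'X_iy1.

Lemma comp_xlin p (a b c d a' b' c' d' : R) :
  (p \mPo xlin a b c d) \mPo xlin a' b' c' d' =
  p \mPo xlin (a * a' + b * c') (a * b' + b * d') (c * a' + d * c') (c * b' + d * d').
Proof.
rewrite comp_mpolyA; congr (_ \mPo _); apply: eq_from_tnth; apply: ord4P;
  rewrite tnth_mktuple /xlin ?tup4E ?comp_mpolyX_tnth ?tup4E //;
  rewrite comp_mpolyD !rmorphM /= !comp_mpolyC !comp_mpolyX_tnth !tup4E !mpolyCD !mpolyCM;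
  ring.
Qed.

Lemma comp_xlin1 p : p \mPo xlin 1 0 0 1 = p.
Proof.
rewrite -[RHS]comp_mpoly_id; congr (_ \mPo _); apply: eq_from_tnth; apply: ord4P;
  by rewrite tnth_mktuple /xlin tup4E ?rmorph1 ?raddf0 ?mul1r ?mul0r ?addr0 ?add0r.
Qed.

Lemma comp_xlinK p {a b c d : R} (D := a * d - b * c) : D != 0 ->
  (p \mPo xlin a b c d) \mPo xlin (d / D) (- b / D) (- c / D) (a / D) = p.
Proof.
move=> nzD; rewrite comp_xlin -[RHS]comp_xlin1.
have -> : a * (d / D) + b * (- c / D) = 1 by rewrite /D; field.
have -> : a * (- b / D) + b * (a / D) = 0 by rewrite /D; field.
have -> : c * (d / D) + d * (- c / D) = 0 by rewrite /D; field.
by have -> : c * (- b / D) + d * (a / D) = 1 by rewrite /D; field.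
Qed.

Definition point10 (c2 c3 : R) : 'I_4 -> R :=
  fun i => if i == ix0 then 1 else if i == ix1 then 0 else if i == iy0 then c2 else c3.

Lemma point10_x0 c2 c3 : point10 c2 c3 ix0 = 1. Proof. by []. Qed.
Lemma point10_x1 c2 c3 : point10 c2 c3 ix1 = 0. Proof. by []. Qed.

Lemma translate_xlin P (b d : R) p :
  (p \mPo xlin (P ix0) b (P ix1) d) \mPo translate (point10 (P iy0) (P iy1)) =
  (p \mPo translate P) \mPo xlin (P ix0) b (P ix1) d.
Proof.
rewrite !comp_mpolyA; apply: (congr1 (fun t => p \mPo t)).
apply: eq_from_tnth; apply: ord4P;
  rewrite [LHS]tnth_mktuple [RHS]tnth_mktuple tnth_translate comp_mpoly_XC /xlin !tup4E;
  rewrite ?comp_mpolyX_tnth ?tnth_translate //;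
  rewrite comp_mpolyD !rmorphM /= !comp_mpolyC !comp_mpolyX_tnth !tnth_translate;
  by rewrite point10_x0 point10_x1 mpolyC1 mpolyC0 addr0 mulrDr mulr1 addrAC.
Qed.

Lemma supp_in_tnth_xlin (F : 'I_4 -> pred 'X_{1..4}) (a b c d : R) :
  F ix0 U_(ix0)%MM -> F ix0 U_(ix1)%MM -> F ix1 U_(ix0)%MM -> F ix1 U_(ix1)%MM ->
  F iy0 U_(iy0)%MM -> F iy1 U_(iy1)%MM ->
  forall i, supp_in (F i) (tnth (xlin a b c d) i).
Proof.
move=> h00 h01 h10 h11 h2 h3; apply: ord4P; rewrite /xlin tup4E;
  by [apply: supp_inD; apply: supp_inCX | apply: supp_inX].
Qed.

Lemma supp_in_xlin_ydeg {a b c d : R} {e p} :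
  supp_in (weight_eq ydeg e) p -> supp_in (weight_eq ydeg e) (p \mPo xlin a b c d).
Proof.
move=> hp.
apply: (supp_in_comp graded_ydeg (fun i => nat_of_bool ((i == iy0) || (i == iy1)))).
  by apply: supp_in_tnth_xlin; rewrite /weight_eq /ydeg !mnm1E.
move=> m /hp; rewrite /weight_eq big_ord4 /= => /eqP <- m'.
by rewrite !mul0n !mul1n !add0n.
Qed.

Lemma supp_in_xlin_fdeg {n} {a b c d : R} {e p} :
  supp_in (weight_eq (fdeg n) e) p -> supp_in (weight_eq (fdeg n) e) (p \mPo xlin a b c d).
Proof.
move=> hp; apply: (supp_in_comp (graded_fdeg n)
  (fun i => if (i == ix0) || (i == ix1) then 1%N else if i == iy0 then n else 0%N)).
  by apply: supp_in_tnth_xlin; rewrite /weight_eq /fdeg !mnm1E /= ?muln0 ?muln1.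
move=> m /hp; rewrite /weight_eq big_ord4 /= => /eqP <- m'.
by rewrite !mul1n mul0n addn0.
Qed.

Lemma supp_in_xlin_mdeg_ge {a b c d : R} {k p} :
  supp_in (mdeg_ge k) p -> supp_in (mdeg_ge k) (p \mPo xlin a b c d).
Proof.
move=> hp; apply: supp_in_comp_mdeg_ge hp.
by apply: (@supp_in_tnth_xlin (fun _ => mdeg_ge 1)); rewrite /mdeg_ge mdeg1.
Qed.

Definition dehom_x0 : 4.-tuple {mpoly R[4]} := tup4 1 'X_ix1 'X_iy0 'X_iy1.

Lemma translate_dehom_x0 v p : v ix0 = 1 ->
  (p \mPo dehom_x0) \mPo translate v =
  (p \mPo translate v) \mPo tup4 0 'X_ix1 'X_iy0 'X_iy1.
Proof.
move=> v0; rewrite !comp_mpolyA; apply: (congr1 (fun t => p \mPo t)).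
apply: eq_from_tnth; apply: ord4P;
  rewrite [LHS]tnth_mktuple [RHS]tnth_mktuple tnth_translate comp_mpoly_XC /dehom_x0;
  by rewrite !tup4E ?comp_mpolyX_tnth ?tnth_translate ?comp_mpoly1 ?v0 ?mpolyC1 ?add0r.
Qed.

Lemma supp_in_dehom_x0 {a p} :
  supp_in (fun m => m ix1 == 0%N) p -> supp_in (weight_eq ydeg a) p ->
  supp_in (mdeg_le a) (p \mPo dehom_x0).
Proof.
move=> h1 hy; apply: (supp_in_comp graded_mdeg_le (fun i => nat_of_bool (i != ix0))).
  apply: ord4P; rewrite /dehom_x0 tup4E;
    by [apply: supp_in1; rewrite /mdeg_le mdeg0 | apply: supp_inX; rewrite /mdeg_le mdeg1].
move=> m hm m'; rewrite big_ord4 /= (eqP (h1 m hm)).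
by move: (hy m hm); rewrite /weight_eq /ydeg /mdeg_le => /eqP <-; rewrite !mul1n mul0n.
Qed.

Lemma dehom_x0K {n a b p} :
  supp_in (fun m => m ix1 == 0%N) p -> supp_in (weight_eq ydeg a) p ->
  supp_in (weight_eq (fdeg n) b) p ->
  'X_ix0 ^+ (n * a) * p =
  'X_ix0 ^+ b * ((p \mPo dehom_x0) \mPo tup4 'X_ix0 'X_ix1 'X_iy0 ('X_ix0 ^+ n * 'X_iy1)).
Proof.
move=> h1 hy hb; rewrite comp_mpolyA comp_mpolyE {1}(mpolyE p) !mulr_sumr.
apply: eq_big_seq => m hm; rewrite -!scalerAr; congr (_ *: _).
rewrite (@mpolyXE_id 4 R m) !big_ord4 /= !tnth_mktuple /dehom_x0 !tup4E comp_mpoly1.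
rewrite !comp_mpolyX_tnth !tup4E.
have := h1 m hm; have := hy m hm; have := hb m hm; rewrite /weight_eq /ydeg /fdeg.
move=> /eqP eb /eqP ea /eqP e1.
have e : (n * a + m ix0 = b + n * m iy1)%N by rewrite -eb -ea e1; lia.
rewrite expr1n exprMn -exprM.
transitivity ('X_ix0 ^+ (n * a + m ix0) *
   ('X_ix1 ^+ m ix1 * 'X_iy0 ^+ m iy0 * 'X_iy1 ^+ m iy1) : {mpoly R[4]}).
  by rewrite exprD; ring.
by rewrite e exprD; ring.
Qed.

Lemma x1_free_eq0 {n a b k v p} : v ix0 = 1 -> (a < k)%N ->
  supp_in (fun m => m ix1 == 0%N) p -> supp_in (weight_eq ydeg a) p ->
  supp_in (weight_eq (fdeg n) b) p ->
  supp_in (mdeg_ge k) (p \mPo translate v) -> p = 0.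
Proof.
move=> v0 ak h1 hy hb hk.
have le_a := supp_in_translate_mdeg_le v (supp_in_dehom_x0 h1 hy).
have ge_k : supp_in (mdeg_ge k) ((p \mPo dehom_x0) \mPo translate v).
  rewrite translate_dehom_x0 //; apply: supp_in_comp_mdeg_ge hk.
  apply: ord4P; rewrite tup4E;
    by [apply: supp_in0 | apply: supp_inX; rewrite /mdeg_ge mdeg1].
have dehom0 : p \mPo dehom_x0 = 0.
  rewrite -(translateK v (p \mPo dehom_x0)).
  rewrite (supp_in_disjoint_eq0 _ ge_k le_a) ?comp_mpoly0 // => m.
  by rewrite /mdeg_ge /mdeg_le; lia.
move: (dehom_x0K h1 hy hb); rewrite dehom0 comp_mpoly0 mulr0 => /eqP.
by rewrite mulf_eq0 expf_eq0 (negbTE (mpolyX_neq0 _)) andbF => /eqP.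
Qed.

Lemma X1_factor {n a b k v q} : v ix0 = 1 -> v ix1 = 0 -> (a < k)%N ->
  supp_in (weight_eq ydeg a) q -> supp_in (weight_eq (fdeg n) b) q ->
  supp_in (mdeg_ge k) (q \mPo translate v) ->
  exists2 r, q = r * 'X_ix1 &
    [/\ supp_in (weight_eq ydeg a) r, supp_in (weight_eq (fdeg n) b.-1) r
      & supp_in (mdeg_ge k.-1) (r \mPo translate v)].
Proof.
move=> v0 v1 ak hy hb hk.
have [q0 [q1 [def_q hq0]]] := mpoly_splitX ix1 q.
have q0_x1 : supp_in (fun m => m ix1 == 0%N) q0 by move=> m /hq0 /andP[].
have X1_translate : 'X_ix1 \mPo translate v = 'X_ix1.
  by rewrite comp_mpolyX_tnth tnth_translate v1 mpolyC0 addr0.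
have q0_k : supp_in (mdeg_ge k) (q0 \mPo translate v).
  apply: (@supp_in_disjoint_addl _ _ (fun m => m ix1 == 0%N) (fun m => 0 < m ix1)%N _ _
            ((q1 \mPo translate v) * 'X_ix1)).
  - by move=> m /eqP ->.
  - exact: supp_in_translate_var0.
  - apply: (@supp_inM _ _ predT (fun m => 0 < m ix1)%N) => //.
      by move=> m1 m2 _; rewrite mnmDE; lia.
    by apply: supp_inX; rewrite mnm1E.
  - by rewrite -X1_translate -rmorphM /= -comp_mpolyD -def_q.
have q0_y : supp_in (weight_eq ydeg a) q0 by move=> m /hq0 /andP[/hy].
have q0_b : supp_in (weight_eq (fdeg n) b) q0 by move=> m /hq0 /andP[/hb].
move: hy hb hk; rewrite def_q (x1_free_eq0 v0 ak q0_x1 q0_y q0_b q0_k) add0r.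
rewrite rmorphM /= X1_translate => hy hb hk.
exists q1 => //; split.
- move=> m /(supp_in_mulX _ hy); rewrite /weight_eq /ydeg !mnmDE !mnm1E /=; lia.
- move=> m /(supp_in_mulX _ hb); rewrite /weight_eq /fdeg !mnmDE !mnm1E /=; lia.
- move=> m /(supp_in_mulX _ hk); rewrite /mdeg_ge mdegD mdeg1; lia.
Qed.

Lemma X1_expn_factor {n a b k v q} j : v ix0 = 1 -> v ix1 = 0 -> (j + a <= k)%N ->
  supp_in (weight_eq ydeg a) q -> supp_in (weight_eq (fdeg n) b) q ->
  supp_in (mdeg_ge k) (q \mPo translate v) -> exists r, q = r * 'X_ix1 ^+ j.
Proof.
move=> v0 v1; elim: j k b q => [|j IHj] k b q le_jak hy hb hk.
  by exists q; rewrite mulr1.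
have [|r -> [ry rb rk]] := X1_factor v0 v1 _ hy hb hk; first lia.
have [|r' ->] := IHj _ _ _ _ ry rb rk; first lia.
by exists r'; rewrite exprSr mulrA.
Qed.

Definition fiber_eq P : {mpoly R[4]} := (P ix1)%:MP * 'X_ix0 - (P ix0)%:MP * 'X_ix1.

Lemma fiber_eq_expn_dvd {n a b k j P p} :
  P ix0 != 0 \/ P ix1 != 0 -> (j + a <= k)%N ->
  supp_in (weight_eq ydeg a) p -> supp_in (weight_eq (fdeg n) b) p ->
  supp_in (mdeg_ge k) (p \mPo translate P) -> exists q, p = q * fiber_eq P ^+ j.
Proof.
move=> nzP le_jak hy hb hk.
have [e0 [e1 nzD]] : exists e0 e1 : R, P ix0 * e1 - e0 * P ix1 != 0.
  have [P0|nzP0] := eqVneq (P ix0) 0; last by exists 0, 1; rewrite mulr1 mul0r subr0.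
  exists 1, 0; rewrite P0 mul0r sub0r mul1r oppr_eq0.
  by case: nzP; rewrite ?P0 ?eqxx.
set D := P ix0 * e1 - e0 * P ix1 in nzD.
have [r def_r] : exists r, p \mPo xlin (P ix0) e0 (P ix1) e1 = r * 'X_ix1 ^+ j.
  apply: (X1_expn_factor j (point10_x0 (P iy0) (P iy1)) (point10_x1 _ _) le_jak
           (supp_in_xlin_ydeg hy) (supp_in_xlin_fdeg hb)).
  by rewrite translate_xlin; apply: supp_in_xlin_mdeg_ge.
have X1_inv : 'X_ix1 \mPo xlin (e1 / D) (- e0 / D) (- P ix1 / D) (P ix0 / D) =
              (- D^-1)%:MP * fiber_eq P.
  rewrite comp_mpolyX_tnth /xlin tup4_1 /fiber_eq !mpolyCM !mpolyCN; ring.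
exists ((r \mPo xlin (e1 / D) (- e0 / D) (- P ix1 / D) (P ix0 / D)) * (- D^-1)%:MP ^+ j).
by rewrite -[LHS](comp_xlinK p nzD) def_r rmorphM rmorphXn /= X1_inv -mulrA -exprMn.
Qed.

Lemma supp_in_fiber_eq {P} :
  supp_in (fun m => (m == U_(ix0)%MM) || (m == U_(ix1)%MM)) (fiber_eq P).
Proof. by apply: supp_inD; last apply: supp_inN; apply: supp_inCX; rewrite eqxx ?orbT. Qed.

Lemma fiber_eq_neq0 {P} : P ix0 != 0 \/ P ix1 != 0 -> fiber_eq P != 0.
Proof.
have U10 : (U_(ix1) == U_(ix0) :> 'X_{1..4})%MM = false.
  by apply/eqP => /mnmP /(_ ix0); rewrite !mnm1E.
move=> nzP; apply/negP => /eqP P0.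
have := congr1 (mcoeff U_(ix0)) P0; have := congr1 (mcoeff U_(ix1)) P0.
rewrite /fiber_eq !mcoeffB !mul_mpolyC !mcoeffZ !mcoeffX !eqxx U10 eq_sym U10 !mcoeff0.
rewrite /= mulr0 mulr1 sub0r => /eqP; rewrite oppr_eq0 => /eqP P0'.
rewrite mulr0 mulr1 subr0 => P1'.
by case: nzP; rewrite ?P0' ?P1' eqxx.
Qed.

Lemma msize_fiber_eq {P} : P ix0 != 0 \/ P ix1 != 0 -> msize (fiber_eq P) = 2%N.
Proof.
move=> /fiber_eq_neq0 nz; rewrite -(mlead_deg nz).
by case/orP: (supp_in_fiber_eq _ (mlead_supp nz)) => /eqP ->; rewrite mdeg1.
Qed.

End FourVariables.

Lemma irreducible_fiber_eq P : P ix0 != 0 \/ P ix1 != 0 -> irreducible_cox (fiber_eq P).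
Proof.
move=> nzP; split=> [|u v def_uv]; first by rewrite msize_fiber_eq.
have nz := fiber_eq_neq0 nzP.
have nzu : u != 0 by apply: contraNneq nz => u0; rewrite def_uv u0 mul0r.
have nzv : v != 0 by apply: contraNneq nz => v0; rewrite def_uv v0 mulr0.
move: (msize_fiber_eq nzP) (msize_poly_eq0 u) (msize_poly_eq0 v).
rewrite def_uv msizeM // (negbTE nzu) (negbTE nzv).
case: (msize u) => [|su]; case: (msize v) => [|sv] //=; lia.
Qed.

Lemma bihomogeneous_fiber_eq n P : bihomogeneous n (fiber_eq P).
Proof.
have bidegU i : (i == ix0) || (i == ix1) -> bideg n U_(i)%MM = (1%:Z, 0%N).
  by case/orP=> /eqP ->; rewrite /bideg !mnm1E /= muln0.
by move=> m m' /supp_in_fiber_eq /orP[] /eqP -> /supp_in_fiber_eq /orP[] /eqP ->;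
  rewrite !bidegU ?eqxx ?orbT.
Qed.

Lemma on_curve_fiber_eq P : on_curve (fiber_eq P) P.
Proof. by rewrite /on_curve /fiber_eq mevalB !mevalM !mevalC !mevalXU mulrC subrr. Qed.

Lemma ord_curve_fiber_eq {n A B k j P p} : P ix0 != 0 \/ P ix1 != 0 -> (j + A <= k)%N ->
  section_of_class n A B p -> ord_pt_ge P p k -> ord_curve_ge (fiber_eq P) p j.
Proof.
move=> nzP le_jAk hp hk.
have hA : supp_in (weight_eq ydeg A) p by move=> m /hp /andP[].
have hB : supp_in (weight_eq (fdeg n) B) p by move=> m /hp /andP[].
exact: fiber_eq_expn_dvd nzP le_jAk hA hB hk.
Qed.

Theorem mainTheorem8 (n : nat) (L : nat * nat) (phi gamma : CoxRing)
    (P : 'I_4 -> C) :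
  allowed_L n L ->
  section_of_class n (4 * L.1) (4 * L.2) phi ->
  section_of_class n (6 * L.1) (6 * L.2) gamma ->
  Fn_point_rep P ->
  ord_pt_ge P phi 8 ->
  ord_pt_ge P gamma 12 ->
  exists g : CoxRing,
    [/\ bihomogeneous n g, irreducible_cox g, on_curve g P,
        ord_curve_ge g phi 4 & ord_curve_ge g gamma 6].
Proof.
move=> hL phi_L gamma_L [nzP _] phi_8 gamma_12.
have L1_le1 : (L.1 <= 1)%N by case: hL => [->|[->|->]].
exists (fiber_eq P); split.
- exact: bihomogeneous_fiber_eq.
- exact: irreducible_fiber_eq.
- exact: on_curve_fiber_eq.
- by apply: (ord_curve_fiber_eq nzP _ phi_L phi_8); lia.
- by apply: (ord_curve_fiber_eq nzP _ gamma_L gamma_12); lia.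
Qed.
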